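(* Let $G=(V,E)$ be a graph, $c\ge1$, $\epsilon\in[0,1/3)$, let $\kappa(G)=(V,\kappa(E))$ be an $(\epsilon,c)$-kernel of $G$ with tight nodes $\kappa_T(V)$, and let $M$ be a matching in $\kappa(G)$ such that every augmenting path in $\kappa(G)$ with respect to $M$ has length at least five. Let $F_T$ be the set of tight nodes unmatched in $M$. Then for every edge $(u,v)\in M$, $$\big|(\kappa(\mathcal N_u)\cap F_T)\cup(\kappa(\mathcal N_v)\cap F_T)\big|\le(1+\epsilon)c.$$
   Context: Let $\mathcal N_v$ denote the set of neighbors of $v$ in $G$. A subgraph $\kappa(G)=(V,\kappa(E))$ with $\kappa(E)\subseteq E$ is given, together with a partition of $V$ into tight nodes $\kappa_T(V)$ and slack nodes $\kappa_S(V)$. For $v\in V$ let $\kappa(\mathcal N_v)=\{u\in\mathcal N_v:(u,v)\in\kappa(E)\}$ (the friends of $v$). For $c\ge1$ and $\epsilon\in[0,1/3)$, $\kappa(G)$ is an $(\epsilon,c)$-kernel of $G$ (w.r.t. this partition) iff: (i) $|\kappa(\mathcal N_v)|\le(1+\epsilon)c$ for all $v\in V$; (ii) $|\kappa(\mathcal N_v)|\ge(1-\epsilon)c$ for all $v\in\kappa_T(V)$; (iii) for all $u,v\in\kappa_S(V)$, if $(u,v)\in E$ then $(u,v)\in\kappa(E)$. Given a matching $M$ in a graph $H$, an augmenting path of length $2k+1$ ($k \ge 0$) is a simple path in $H$ with $2k+1$ edges whose two end nodes are unmatched in $M$ and whose edges alternate between non-$M$ and $M$ edges (first and last edges not in $M$).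 *)

From HB Require Import structures.
From mathcomp Require Import all_boot all_order all_algebra.
Set Implicit Arguments. Unset Strict Implicit. Unset Printing Implicit Defensive.
Import Order.TTheory GRing.Theory Num.Theory.

Definition simple_graph (V : finType) (E : rel V) : Prop :=
  symmetric E /\ irreflexive E.

Definition nbrs (V : finType) (E : rel V) (v : V) : {set V} := [set u | E u v].

(* friends of v: kappa(N_v) = { u in N_v : (u,v) in kappa(E) } *)
Definition friends (V : finType) (E kE : rel V) (v : V) : {set V} :=
  [set u in nbrs E v | kE u v].

(* kappa(G) = (V, kE) is an (eps, c)-kernel of G w.r.t. tight nodes T
   (slack nodes = complement of T). *)
Definition is_kernel (R : realFieldType) (V : finType) (E kE : rel V)
    (T : {set V}) (eps c : R) : Prop :=
  [/\ symmetric kE,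
      (forall u v, kE u v -> E u v),
      (forall v, (#|friends E kE v|%:R <= (1 + eps) * c)%R),
      (forall v, v \in T -> ((1 - eps) * c <= #|friends E kE v|%:R)%R)
    & (forall u v, u \in ~: T -> v \in ~: T -> E u v -> kE u v)].

Definition is_matching (V : finType) (H M : rel V) : Prop :=
  [/\ symmetric M,
      (forall u v, M u v -> H u v)
    & (forall u v w, M u v -> M u w -> v = w)].

Definition matched (V : finType) (M : rel V) (v : V) : bool := [exists u, M v u].

(* f 0, f 1, ..., f (2k+1) is an augmenting path of length 2k+1 in H w.r.t. M:
   simple, consecutive nodes adjacent in H, the i-th edge (f i, f i.+1)
   is in M iff i is odd (so first and last edges are non-M), endpoints unmatched. *)
Definition aug_path (V : finType) (H M : rel V) (k : nat) (f : nat -> V) : Prop :=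
  [/\ (forall i j, i <= 2 * k + 1 -> j <= 2 * k + 1 -> f i = f j -> i = j),
      (forall i, i < 2 * k + 1 -> H (f i) (f i.+1) /\ M (f i) (f i.+1) = odd i),
      ~~ matched M (f 0)
    & ~~ matched M (f (2 * k + 1))].

From HB Require Import structures.
From mathcomp Require Import all_boot all_order all_algebra.
Import Order.TTheory GRing.Theory Num.Theory.

Set Implicit Arguments.
Unset Strict Implicit.
Unset Printing Implicit Defensive.

(* If x and y were distinct free tight friends of u and v respectively, then
   x - u - v - y would be an augmenting path of length 3 in the kernel.  Hence
   either one of the two sets of free tight friends is empty, and the union is
   bounded by the friend count of the other endpoint, or both are the same
   singleton, whose size 1 <= c <= (1 + eps) c. *)

Lemma unmatched_rel (V : finType) (M : rel V) x y : ~~ matched M x -> ~~ M x y.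
Proof. by move=> /existsPn. Qed.

Lemma matched_rel (V : finType) (M : rel V) x y : M x y -> matched M x.
Proof. by move=> Mxy; apply/existsP; exists y. Qed.

Section AugmentingPath3.

Variables (V : finType) (H M : rel V).
Hypothesis Mmatching : is_matching H M.

Definition path3 (x u v y : V) (i : nat) : V :=
  match i with 0 => x | 1 => u | 2 => v | _ => y end.

Lemma aug_path3 x u v y :
  H x u -> M u v -> H v y -> ~~ matched M x -> ~~ matched M y ->
  u != v -> x != y -> aug_path H M 1 (path3 x u v y).
Proof.
case: Mmatching => Msym MH _ Hxu Muv Hvy x_free y_free uv xy.
have u_matched : matched M u := matched_rel Muv.
have v_matched : matched M v by apply: (@matched_rel _ _ _ u); rewrite Msym.
have xu : x != u by apply: contraNneq x_free => ->.
have xv : x != v by apply: contraNneq x_free => ->.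
have yu : y != u by apply: contraNneq y_free => ->.
have yv : y != v by apply: contraNneq y_free => ->.
split=> //.
- move=> [|[|[|[|i]]]] [|[|[|[|j]]]] //= _ _ eq_ij; move: xu xv xy uv yu yv;
    by rewrite eq_ij eqxx.
- move=> [|[|[|i]]] //= _; split=> //.
  + exact/negbTE/unmatched_rel.
  + exact: MH.
  + by apply/negbTE; rewrite Msym; apply: unmatched_rel.
Qed.

End AugmentingPath3.

Lemma no_aug_path3_free_nbrs_eq (V : finType) (H M : rel V) u v x y :
  is_matching H M ->
  (forall f, ~ aug_path H M 1 f) ->
  M u v -> u != v -> H x u -> H v y ->
  ~~ matched M x -> ~~ matched M y -> x = y.
Proof.
move=> Mmatching no_aug Muv uv Hxu Hvy x_free y_free.
apply/eqP; apply: contraT => xy.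
by case: (no_aug _ (aug_path3 Mmatching Hxu Muv Hvy x_free y_free uv xy)).
Qed.

Lemma setU_pointwise_eq (T : finType) (A B : {set T}) :
  (forall x y, x \in A -> y \in B -> x = y) ->
  [\/ A = set0, B = set0 | #|A :|: B| = 1].
Proof.
move=> AB; have [-> | [x xA]] := set_0Vmem A; first by constructor 1.
have [-> | [y yB]] := set_0Vmem B; first by constructor 2.
constructor 3; apply/eqP/cards1P; exists x; apply/setP => w.
rewrite !inE; apply/orP/eqP => [[wA | wB] | ->]; last by left.
- by rewrite (AB _ _ wA yB) (AB _ _ xA yB).
- by rewrite (AB _ _ xA wB).
Qed.

Theorem lemma3p13 (R : realFieldType) (V : finType) (E kE M : rel V)
    (T : {set V}) (eps c : R) :
  simple_graph E ->
  (1 <= c)%R -> (0 <= eps)%R -> (eps < 1 / 3)%R ->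
  is_kernel E kE T eps c ->
  is_matching kE M ->
  (forall (k : nat) (f : nat -> V), aug_path kE M k f -> 5 <= 2 * k + 1) ->
  forall u v, M u v ->
    let FT := [set w in T | ~~ matched M w] in
    (#|(friends E kE u :&: FT) :|: (friends E kE v :&: FT)|%:R <= (1 + eps) * c)%R.
Proof.
move=> [_ Eirr] c_ge1 eps_ge0 _ [kEsym kEE friends_le _ _] Mmatching no_aug u v Muv.
cbv zeta; set FT := [set w in T | _].
have no_aug3 f : ~ aug_path kE M 1 f by move/no_aug.
have uv : u != v.
  have [_ MkE _] := Mmatching.
  by apply: contraTneq (kEE _ _ (MkE _ _ Muv)) => ->; rewrite Eirr.
have free_friend w x : x \in friends E kE w :&: FT -> kE x w && ~~ matched M x.
  by rewrite !inE => /and3P[/andP[_ ->] _ ->].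
have bound_friends w : (#|friends E kE w :&: FT|%:R <= (1 + eps) * c)%R.
  by apply: le_trans (friends_le w); rewrite ler_nat subset_leq_card ?subsetIl.
have free_friends_eq x y :
    x \in friends E kE u :&: FT -> y \in friends E kE v :&: FT -> x = y.
  move=> /free_friend/andP[kxu x_free] /free_friend/andP[kyv y_free].
  apply: (no_aug_path3_free_nbrs_eq Mmatching no_aug3 Muv uv kxu _ x_free y_free).
  by rewrite kEsym.
have [-> | -> | ->] := setU_pointwise_eq free_friends_eq.
- by rewrite set0U.
- by rewrite setU0.
- apply: le_trans (c_ge1) _.
  by rewrite ler_peMl ?lerDl // (le_trans ler01 c_ge1).
Qed.
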